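(* Let $G$ be a finite group, $p$ a prime, $N\trianglelefteq G$ and $H\leq G$ with $G=NH$, and set $M:=N\cap H$. Let $K\trianglelefteq G$ with $K\leq M$ and let $\zeta\in\mathrm{Irr}_{p'}(N)$ be $G$-invariant with $\zeta_K\in\mathrm{Irr}(K)$. Write $\overline{G}:=G/K$, $\overline{N}:=N/K$, $\overline{H}:=H/K$, $\overline{M}:=M/K$, and suppose that $(\overline{G},\overline{N},\overline{\chi})\geq_c(\overline{H},\overline{M},\overline{\psi})$ for some $\overline{\chi}\in\mathrm{Irr}_{p'}(\overline{N})$ and $\overline{\psi}\in\mathrm{Irr}_{p'}(\overline{M})$. Let $\chi\in\mathrm{Irr}(N)$ and $\psi\in\mathrm{Irr}(M)$ be the inflations of $\overline{\chi}$ and $\overline{\psi}$. Then $$(G,N,\chi\zeta)\geq_c(H,M,\psi\zeta_M).$$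
   Context: $\mathrm{Irr}_{p'}(X)$ is the set of irreducible characters of $X$ of degree prime to $p$; $\zeta_K$ denotes restriction. Character triples and $\geq_c$: a character triple $(G,N,\vartheta)$ consists of $N\trianglelefteq G$ and a $G$-invariant $\vartheta\in\mathrm{Irr}(N)$. A projective representation of $G$ associated with $\vartheta$ is a map $\mathcal{P}:G\to\mathrm{GL}_{\vartheta(1)}(\mathbb{C})$ with $\mathcal{P}(x)\mathcal{P}(y)=\alpha(x,y)\mathcal{P}(xy)$ for a factor set $\alpha$, such that $\mathcal{P}|_N$ is a representation affording $\vartheta$ and $\mathcal{P}(xn)=\mathcal{P}(x)\mathcal{P}(n)$, $\mathcal{P}(nx)=\mathcal{P}(n)\mathcal{P}(x)$ for $x\in G,n\in N$. One writes $(G,N,\vartheta)\geq_c(H,M,\varphi)$ for character triples if $G=NH$, $M=N\cap H$, $\mathbf{C}_G(N)\leq H$, and there are projective representations $\mathcal{P}$ of $G$ associated with $\vartheta$ and $\mathcal{P}'$ of $H$ associated with $\varphi$, with factor sets $\alpha,\alpha'$, such that $\alpha|_{H\times H}=\alpha'$ and for every $c\in\mathbf{C}_G(N)$ the matrices $\mathcal{P}(c)$, $\mathcal{P}'(c)$ are scalar with the same scalar. *)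

From mathcomp Require Import all_boot all_order all_algebra all_fingroup all_solvable all_field all_character.
Unset Implicit Arguments. Unset Strict Implicit. Unset Printing Implicit Defensive.
Import GroupScope GRing.Theory Num.Theory.
Local Open Scope ring_scope.

Section CharTriples.
Variable gT : finGroupType.

Definition p'_degree (p : nat) (N : {group gT}) (chi : 'CF(N)) : bool :=
  ~~ (p %| Num.truncn (chi 1%g))%N.

Definition char_triple (G N : {group gT}) (theta : 'CF(N)) : Prop :=
  [/\ N <| G, theta \in irr N & G \subset 'I[theta]].

Definition proj_rep_assoc (G N : {group gT}) (theta : 'CF(N)) (n : nat)
    (P : gT -> 'M[algC]_n) (alpha : gT -> gT -> algC) : Prop :=
  [/\ theta 1%g = n%:R,
      {in G, forall x, P x \in unitmx},
      {in G &, forall x y, P x *m P y = alpha x y *: P (x * y)%g},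
      mx_repr N P /\ {in N, forall x, \tr (P x) = theta x}
    & {in G & N, forall x m, P (x * m)%g = P x *m P m /\ P (m * x)%g = P m *m P x}].

Definition geq_c (G N : {group gT}) (theta : 'CF(N))
                 (H M : {group gT}) (phi : 'CF(M)) : Prop :=
  [/\ char_triple G N theta, char_triple H M phi,
      [/\ G :=: (N * H)%g, M :=: (N :&: H)%g & 'C_G(N) \subset H] &
      exists (n n' : nat) (P : gT -> 'M[algC]_n) (P' : gT -> 'M[algC]_n')
             (alpha alpha' : gT -> gT -> algC),
        [/\ proj_rep_assoc G N theta n P alpha,
            proj_rep_assoc H M phi n' P' alpha',
            {in H &, forall x y, alpha x y = alpha' x y} &
            {in 'C_G(N), forall c, exists a : algC,
               P c = a%:M /\ P' c = a%:M}]].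
End CharTriples.
Arguments p'_degree {gT} p {N} chi.
Arguments char_triple {gT} G N theta.
Arguments proj_rep_assoc {gT} G N theta {n} P alpha.
Arguments geq_c {gT} G N theta H M phi.

From mathcomp Require Import all_boot all_order all_algebra all_fingroup all_solvable all_field all_character.
From Stdlib Require Import ClassicalEpsilon.
Import GroupScope GRing.Theory Num.Theory.
Local Open Scope ring_scope.
Set Implicit Arguments. Unset Strict Implicit. Unset Printing Implicit Defensive.

(* Let Z be a representation of N affording zeta. Since zeta is G-invariant,
   each g in G has an invertible A_g with A_g Z(x) A_g^-1 = Z(x^(g^-1)); fixing
   coset representatives g_0 of N, Q(g) := A_(g_0) Z(g_0^-1 g) extends Z, and by
   Schur's lemma Q is a projective representation of G associated with zeta that
   is scalar on C_G(N); its restriction to H is associated with zeta_M.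
   Tensoring Q with the inflations of the projective representations witnessing
   the hypothesis multiplies both factor sets by that of Q, so they still agree
   on H x H, and as C_G(N)K/K lies in C_(G/K)(N/K) the new representations are
   still scalar with equal scalars there. Irreducibility of chi zeta and
   psi zeta_M is Gallagher's theorem, as zeta_K is irreducible. *)

Section InvariantIrrProjRep.
Local Open Scope group_scope.
Variables (gT : finGroupType) (G N : {group gT}) (zeta : Iirr N).
Hypotheses (nsNG : N <| G) (IGzeta : G \subset 'I['chi_zeta]).

Let Z := 'Chi_zeta.
Let d := irr_degree (socle_of_Iirr zeta).
Let sNG : N \subset G := normal_sub nsNG.
Let nNG : G \subset 'N(N) := normal_norm nsNG.

Let mxtrace_Z x : x \in N -> \tr (Z x) = 'chi_zeta x.
Proof. by move=> Nx; rewrite -irrRepr cfunE Nx mulr1n. Qed.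

Let intertwines g (A : 'M[algC]_d) :=
  A \in unitmx /\ {in N, forall x, A *m Z x = Z (x ^ g^-1) *m A}.

(* As zeta is G-invariant, Z and its conjugate by g afford the same character. *)
Let intertwiner_exists g : g \in G -> exists A, intertwines g A.
Proof.
move=> Gg; have nNg : g^-1 \in 'N(N) by rewrite groupV (subsetP nNG).
have ZgP : mx_repr N (fun x => Z (x ^ g^-1)).
  split=> [|x y Nx Ny]; first by rewrite conj1g repr_mx1.
  by rewrite conjMg repr_mxM // memJ_norm.
have : cfRepr (MxRepresentation ZgP) == cfRepr Z.
  apply/eqP/cfun_inP=> x Nx; rewrite !cfunE Nx !mulr1n /=.
  by rewrite !mxtrace_Z ?memJ_norm // inertia_valJ // groupV (subsetP IGzeta).
case/cfRepr_rsimP/mx_rsim_def=> B [B' BB' /= defZg].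
have [_ uB] := mulmx1_unit BB'.
exists B; split=> // x Nx.
have -> : Z (x ^ g^-1) = B *m Z x *m B' := defZg x Nx.
by rewrite -[_ *m B' *m B]mulmxA BB' mulmx1.
Qed.

(* Normalised at 1, so that the projective representation Q below extends Z. *)
Let intertwiner g : 'M[algC]_d :=
  if g == 1 then 1%:M else epsilon (inhabits 0) (intertwines g).

Let intertwinerP g : g \in G -> intertwines g (intertwiner g).
Proof.
rewrite /intertwiner; case: eqP => [-> _ | _ Gg].
  by split=> [|x Nx]; rewrite ?unitmx1 // invg1 conjg1 mul1mx mulmx1.
by apply: epsilon_spec; apply: intertwiner_exists.
Qed.

Let t g := repr (g *: N).

Let t_coset g : g^-1 * t g \in N.
Proof. by rewrite -mem_lcoset; apply: mem_repr (lcoset_refl N g). Qed.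

Let t_rem g : (t g)^-1 * g \in N.
Proof. by rewrite -[g]invgK -invMg groupV invgK t_coset. Qed.

Let t_in g : g \in G -> t g \in G.
Proof. by move=> Gg; rewrite -[t g](mulKVg g) groupM // (subsetP sNG) ?t_coset. Qed.

Let tMr g m : m \in N -> t (g * m) = t g.
Proof. by move=> Nm; rewrite /t lcosetM lcoset_id. Qed.

Let t_N n : n \in N -> t n = 1.
Proof. by move=> Nn; rewrite /t lcoset_id // repr_group. Qed.

Let Q g := intertwiner (t g) *m Z ((t g)^-1 * g).

Let Q_N n : n \in N -> Q n = Z n.
Proof. by move=> Nn; rewrite /Q t_N // invg1 mul1g /intertwiner eqxx mul1mx. Qed.

Let QMr g m : m \in N -> Q (g * m) = Q g *m Z m.
Proof. by move=> Nm; rewrite /Q tMr // mulgA repr_mxM ?mulmxA ?t_rem. Qed.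

Let Q_conj g x : g \in G -> x \in N -> Q g *m Z x = Z (x ^ g^-1) *m Q g.
Proof.
move=> Gg Nx; rewrite /Q; set u := (t g)^-1 * g.
have Nu : u \in N := t_rem g.
have Nxu : x ^ u^-1 \in N by rewrite memJ_norm // groupV (subsetP nNG) ?(subsetP sNG).
have [_ Ag] := intertwinerP (t_in Gg).
rewrite -mulmxA -repr_mxM //.
have -> : u * x = x ^ u^-1 * u by rewrite conjgE invgK -!mulgA mulVg mulg1.
by rewrite repr_mxM // mulmxA (Ag _ Nxu) -conjgM -invMg /u mulKVg -mulmxA.
Qed.

Let QMl g m : g \in G -> m \in N -> Q (m * g) = Z m *m Q g.
Proof.
move=> Gg Nm; have Nmg : m ^ g \in N by rewrite memJ_norm // (subsetP nNG).
by rewrite conjgC QMr // Q_conj // conjgK.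
Qed.

Let Q_unit g : g \in G -> Q g \in unitmx.
Proof.
move=> Gg; have [uA _] := intertwinerP (t_in Gg).
by rewrite unitmx_mul uA repr_mx_unit ?t_rem.
Qed.

Let Z_abs_irr : mx_absolutely_irreducible Z.
Proof. exact/groupC/socle_irr. Qed.

(* Schur's lemma: Q (x * y)^-1 Q x Q y commutes with Z. *)
Let QM_scalar x y :
  x \in G -> y \in G -> exists a, Q x *m Q y = (a *: Q (x * y)%g)%R.
Proof.
move=> Gx Gy; have Gxy : x * y \in G by rewrite groupM.
pose D := invmx (Q (x * y)) *m (Q x *m Q y).
have cZD : centgmx Z D.
  apply/centgmxP=> m Nm; have Nmy : m ^ y^-1 \in N.
    by rewrite memJ_norm // groupV (subsetP nNG).
  have E1 : Q x *m Q y *m Z m = Z (m ^ (x * y)^-1) *m (Q x *m Q y).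
    by rewrite -mulmxA Q_conj // mulmxA Q_conj // -mulmxA invMg conjgM.
  have E2 : invmx (Q (x * y)) *m Z (m ^ (x * y)^-1) = Z m *m invmx (Q (x * y)).
    by rewrite -[Z (m ^ _)](mulmxK (Q_unit Gxy)) -Q_conj // -mulmxA mulKmx ?Q_unit.
  by rewrite /D -mulmxA E1 mulmxA E2 -mulmxA.
have [a Da] := is_scalar_mxP (mx_abs_irr_cent_scalar Z_abs_irr cZD).
by exists a; rewrite -mul_mx_scalar -Da /D mulKVmx ?Q_unit.
Qed.

Let Q_cent_scalar c : c \in 'C_G(N) -> exists a, Q c = a%:M.
Proof.
case/setIP=> Gc cNc; have cZQ : centgmx Z (Q c).
  by apply/centgmxP=> m Nm; rewrite -QMr // -QMl // (centP cNc).
exact/is_scalar_mxP/(mx_abs_irr_cent_scalar Z_abs_irr cZQ).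
Qed.

Lemma invariant_irr_proj_rep :
  exists n (P : gT -> 'M[algC]_n) (alpha : gT -> gT -> algC),
    proj_rep_assoc G N 'chi_zeta P alpha /\
    {in 'C_G(N), forall c, exists a, P c = a%:M}.
Proof.
pose alpha x y := epsilon (inhabits 0) (fun a => Q x *m Q y = (a *: Q (x * y)%g)%R).
exists d, Q, alpha; split=> //; split.
- by rewrite irr1_degree.
- exact: Q_unit.
- by move=> x y Gx Gy; apply: epsilon_spec (QM_scalar Gx Gy).
- split=> [|x Nx]; last by rewrite Q_N ?mxtrace_Z.
  by split=> [|x y Nx Ny]; rewrite !Q_N ?groupM ?repr_mx1 ?repr_mxM.
- by move=> x m Gx Nm; rewrite QMr // QMl // (Q_N Nm).
Qed.

End InvariantIrrProjRep.

Section TensorScale.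
Variable F : fieldType.

Lemma tprodZl m1 n1 m2 n2 (a : F) (A : 'M_(m1, n1)) (B : 'M_(m2, n2)) :
  tprod (a *: A) B = a *: tprod A B.
Proof.
elim: m1 n1 A => [|m1 IH] n1 A /=; first by rewrite scaler0.
pose A' : 'M_(1 + m1, n1) := A.
have -> : usubmx (a *: A') = a *: usubmx A' by exact: linearZ.
have -> : dsubmx (a *: A') = a *: dsubmx A' by exact: linearZ.
by rewrite IH -trowbE linearZ scale_col_mx.
Qed.

Lemma tprodZr m1 n1 m2 n2 (a : F) (A : 'M_(m1, n1)) (B : 'M_(m2, n2)) :
  tprod A (a *: B) = a *: tprod A B.
Proof.
elim: m1 n1 A => [|m1 IH] n1 A /=; first by rewrite scaler0.
by rewrite IH [X in col_mx X _]linearZ scale_col_mx.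
Qed.

Lemma tprod_scalar m n (a b : F) :
  tprod (a%:M : 'M_m) (b%:M : 'M_n) = (a * b)%:M.
Proof.
by rewrite -[a%:M]scalemx1 -[b%:M]scalemx1 tprodZl tprodZr tprod1 scalerA scalemx1.
Qed.

End TensorScale.

Section ProjRepConstructions.
Variable gT : finGroupType.
Implicit Types G N H K M : {group gT}.

Lemma proj_rep_assoc_Res G N H M (theta : 'CF(N)) n (P : gT -> 'M[algC]_n) alpha :
    H \subset G -> M \subset N ->
  proj_rep_assoc G N theta P alpha -> proj_rep_assoc H M ('Res[M] theta) P alpha.
Proof.
move=> sHG sMN [P1 Pu PM [[Pr1 PrM] Ptr] PN].
have [HG MN] := (subsetP sHG, subsetP sMN).
split.
- by rewrite cfRes1.
- by move=> x /HG; apply: Pu.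
- by move=> x y /HG Gx /HG Gy; apply: PM.
- split; first by split=> // x y /MN Nx /MN Ny; apply: PrM.
  by move=> x Mx; rewrite cfResE ?Ptr ?MN.
- by move=> x m /HG Gx /MN Nm; apply: PN.
Qed.

Lemma proj_rep_assoc_tprod_mod G N K (thetab : 'CF(N / K)) (theta : 'CF(N))
    n1 (Pb : coset_of K -> 'M[algC]_n1) alphab n2 (P : gT -> 'M[algC]_n2) alpha :
    K <| G -> K \subset N -> N \subset G ->
    proj_rep_assoc (G / K) (N / K) thetab Pb alphab ->
    proj_rep_assoc G N theta P alpha ->
  proj_rep_assoc G N ((thetab %% K)%CF * theta)
    (fun x => tprod (Pb (coset K x)) (P x))
    (fun x y => alphab (coset K x) (coset K y) * alpha x y).
Proof.
move=> nsKG sKN sNG [Pb1 Pbu PbM [[Pbr1 PbrM] Pbtr] PbN] [P1 Pu PM [[Pr1 PrM] Ptr] PN].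
have nKG := normal_norm nsKG; have nsKN := normalS sKN sNG nsKG.
have cosetM x y : x \in G -> y \in G -> coset K (x * y)%g = (coset K x * coset K y)%g.
  by move=> Gx Gy; rewrite morphM ?(subsetP nKG).
have qG x : x \in G -> coset K x \in (G / K)%g by apply: mem_quotient.
have qN x : x \in N -> coset K x \in (N / K)%g by apply: mem_quotient.
have GN := subsetP sNG.
split.
- by rewrite cfunE cfMod1 Pb1 P1 natrM.
- move=> x Gx; have [uPb uP] := (Pbu _ (qG x Gx), Pu x Gx).
  have : tprod (Pb (coset K x)) (P x) *m
         tprod (invmx (Pb (coset K x))) (invmx (P x)) = 1%:M.
    by rewrite -tprodE !mulmxV ?tprod1.
  by case/mulmx1_unit.
- by move=> x y Gx Gy; rewrite -tprodE PbM ?PM ?qG // tprodZl tprodZr scalerA cosetM.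
- split; [split|].
  + by rewrite morph1 Pbr1 Pr1 tprod1.
  + by move=> x y Nx Ny; rewrite cosetM ?GN // PbrM ?PrM ?qN // tprodE.
  + by move=> x Nx; rewrite mxtrace_prod Pbtr ?Ptr ?qN // cfunE cfModE.
- move=> x m Gx Nm; have Gm := GN m Nm.
  have [PbxM PbMx] := PbN _ _ (qG x Gx) (qN m Nm).
  have [PxM PMx] := PN _ _ Gx Nm.
  by rewrite !cosetM // PbxM PbMx PxM PMx !tprodE.
Qed.

Lemma char_triple_Res G N H K (theta : 'CF(N)) :
    H \subset G -> K \subset N :&: H ->
    char_triple G N theta -> 'Res[K] theta \in irr K ->
  char_triple H (N :&: H) ('Res theta).
Proof.
move=> sHG sKNH [nsNG irr_theta IGtheta] irrKtheta.
have nsNHH : N :&: H <| H by rewrite setIC (normalGI sHG nsNG).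
split=> //.
  apply: (@cfRes_irr_irr _ _ K); first by rewrite cfRes_char ?irrWchar.
  by rewrite cfResRes ?subsetIl.
have IHtheta : 'I_H[theta] = H by apply/setIidPl/(subset_trans sHG).
by rewrite -{1}IHtheta (subset_trans (sub_inertia_Res _ (normal_norm nsNHH))) ?subsetIr.
Qed.

(* Gallagher's theorem gives irreducibility, since 'Res[K] theta is irreducible. *)
Lemma char_triple_mod_mul G N K (b : Iirr (N / K)) (theta : 'CF(N)) :
    K <| G -> K \subset N ->
    char_triple (G / K) (N / K) 'chi_b -> char_triple G N theta ->
    'Res[K] theta \in irr K ->
  char_triple G N (('chi_b %% K)%CF * theta).
Proof.
move=> nsKG sKN [_ _ IGb] [nsNG /irrP[t ->] IGt] /irrP[s Dt].
have nsKN : K <| N := normalS sKN (normal_sub nsNG) nsKG.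
have [irrMt _ _ _] := constt_Ind_ext nsKN Dt.
split=> //; first by rewrite -mod_IirrE.
apply: subset_trans (inertia_mul _ _); rewrite subsetI IGt andbT.
apply/subsetP=> y Gy; rewrite inE (subsetP (normal_norm nsNG)) //=.
by rewrite (cfConjgMod _ nsNG nsKG Gy) inertiaJ // (subsetP IGb) ?mem_quotient.
Qed.

End ProjRepConstructions.

Theorem proposition2p5 (gT : finGroupType) (p : nat) (G N H K : {group gT})
    (zeta : Iirr N) (chib : Iirr (N / K)) (psib : Iirr ((N :&: H) / K)) :
  prime p ->
  N <| G -> H \subset G -> G :=: (N * H)%g ->
  K <| G -> K \subset N :&: H ->
  p'_degree p 'chi_zeta -> G \subset 'I['chi_zeta] ->
  'Res[K] 'chi_zeta \in irr K ->
  p'_degree p 'chi_chib -> p'_degree p 'chi_psib ->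
  geq_c (G / K)%G (N / K)%G 'chi_chib (H / K)%G ((N :&: H) / K)%G 'chi_psib ->
  geq_c G N (('chi_chib %% K)%CF * 'chi_zeta)
        H (N :&: H)%G (('chi_psib %% K)%CF * 'Res[(N :&: H)%G] 'chi_zeta).
Proof.
move=> _ nsNG sHG defG nsKG sKNH _ IGzeta irrKzeta _ _.
case=> trGb trHb [_ _ sCGbHb] [n [n' [P [P' [a [a' [PG PH eq_a cent_eq]]]]]]].
have sNG := normal_sub nsNG.
have sKH : K \subset H := subset_trans sKNH (subsetIr N H).
have sKN : K \subset N := subset_trans sKNH (subsetIl N H).
have nsKH : K <| H := normalS sKH sHG nsKG.
have trG : char_triple G N 'chi_zeta by split; rewrite ?mem_irr.
have [d [Q [beta [QG cent_Q]]]] := invariant_irr_proj_rep nsNG IGzeta.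
split.
- exact: char_triple_mod_mul.
- apply: char_triple_mod_mul (char_triple_Res sHG sKNH trG irrKzeta) _ => //.
  by rewrite cfResRes ?subsetIl.
- split=> //; rewrite -(quotientSGK _ sKH) ?(subset_trans (subsetIl _ _)) ?normal_norm //.
  exact: subset_trans (quotient_subcent _ _ _) sCGbHb.
exists (n * d)%N, (n' * d)%N,
  (fun x => tprod (P (coset K x)) (Q x)), (fun x => tprod (P' (coset K x)) (Q x)),
  (fun x y => a (coset K x) (coset K y) * beta x y),
  (fun x y => a' (coset K x) (coset K y) * beta x y).
split.
- exact: proj_rep_assoc_tprod_mod.
- apply: proj_rep_assoc_tprod_mod => //; first exact: subsetIr.
  exact: proj_rep_assoc_Res (subsetIl N H) QG.
- by move=> x y Hx Hy; rewrite eq_a ?mem_quotient.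
- move=> c CGc; have [b ->] := cent_Q c CGc.
  have CGbc := subsetP (quotient_subcent _ _ _) _ (mem_quotient K CGc).
  have [b' [-> ->]] := cent_eq _ CGbc.
  by exists (b' * b); rewrite !tprod_scalar.
Qed.
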